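(* Let $n\ge2$ and $k\in\{2,\dots,n\}$. Then $$\Lambda_n+(-1)^k\sum_{\pi\in\mathcal M_n^k}\pi(\Lambda_n)\equiv0\pmod{R(n)}.$$
   Context: An $n$-graph is an oriented graph with vertex set $\{1,\dots,n\}$, without loops but possibly with multiple edges; $\mathcal G(n)$ is the set of $n$-graphs and $\mathbb F\mathcal G(n)$ the vector space over a field $\mathbb F$ (characteristic $0$) with basis $\mathcal G(n)$. $R(n)$ is the subspace spanned by: (i) every $\Gamma$ containing a cycle of its underlying unoriented multigraph (two edges joining the same two vertices count as a cycle); (ii) every sum $\sum_{e\in C}\Gamma\setminus e$ with $C\subset E(\Gamma)$ an oriented cycle and $\Gamma\setminus e$ the graph with $e$ removed. $\equiv$ means equality in $\mathbb F\mathcal G(n)/R(n)$. $\Lambda_n$ is the $n$-graph with edges $1\to2,\dots,(n-1)\to n$. For $\sigma\in S_n$, $\sigma(\Gamma)$ is $\Gamma$ with vertex $i$ relabeled $\sigma(i)$ (edge $i\to j$ becomes $\sigma(i)\to\sigma(j)$). A permutation $\pi\in S_n$ is monotone if for each $i$ either $\pi(j)<\pi(i)$ for all $j<i$ or $\pi(j)>\pi(i)$ for all $j<i$; $\mathcal M_n^k$ is the set of monotone permutations with $\pi(1)=k$. *)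

From mathcomp Require Import all_boot all_order all_algebra all_fingroup.
Set Implicit Arguments. Unset Strict Implicit. Unset Printing Implicit Defensive.
Import GRing.Theory.
Local Open Scope ring_scope.

(* Vertex i of the paper (1 <= i <= n) is the ordinal i-1 : 'I_n.
   An oriented multigraph is given by its edge multiplicity function:
   g (i, j) = number of edges i -> j. *)
Definition mgraph (n : nat) := {ffun 'I_n * 'I_n -> nat}.

Definition loopless n (g : mgraph n) : bool := [forall i, g (i, i) == 0%N].

(* Elements of F G(n): finite formal linear combinations of graphs,
   compared through their coefficient functions. *)
Definition fcomb (F : fieldType) n := seq (F * mgraph n).
Definition coef (F : fieldType) n (x : fcomb F n) (g : mgraph n) : F :=
  \sum_(p <- x) (if p.2 == g then p.1 else 0).

Definition del_edge n (g : mgraph n) (e : 'I_n * 'I_n) : mgraph n :=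
  [ffun p => if p == e then (g p).-1 else g p].

Definition und_mult n (g : mgraph n) (i j : 'I_n) : nat := (g (i, j) + g (j, i))%N.

(* g has a cycle in its underlying unoriented multigraph: distinct vertices
   v_0,...,v_{m-1} (m >= 2) cyclically joined by distinct edges; for m = 2
   this means two distinct edges joining v_0 and v_1. *)
Definition has_ucycle n (g : mgraph n) : Prop :=
  exists s : seq 'I_n, [/\ uniq s, (2 <= size s)%N &
    if size s == 2%N then all (fun x => (1 < und_mult g x (next s x))%N) s
    else all (fun x => (0 < und_mult g x (next s x))%N) s].

Definition is_ocycle n (g : mgraph n) (s : seq 'I_n) : Prop :=
  [/\ uniq s, (2 <= size s)%N & all (fun x => (0 < g (x, next s x))%N) s].

Definition cycle_rel (F : fieldType) n (g : mgraph n) (s : seq 'I_n) : fcomb F n :=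
  [seq (1, del_edge g (x, next s x)) | x <- s].

Definition R_gen (F : fieldType) n (x : fcomb F n) : Prop :=
  (exists g : mgraph n, [/\ loopless g, has_ucycle g & x = [:: (1, g)]]) \/
  (exists (g : mgraph n) (s : seq 'I_n),
      [/\ loopless g, is_ocycle g s & x = cycle_rel F g s]).

(* x lies in R(n) = span of the generators, i.e. x == 0 in F G(n) / R(n) *)
Definition equiv0 (F : fieldType) n (x : fcomb F n) : Prop :=
  exists l : seq (F * fcomb F n),
    (forall p, p \in l -> R_gen p.2) /\
    forall g : mgraph n, coef x g = \sum_(p <- l) p.1 * coef p.2 g.

Definition Lambda n : mgraph n := [ffun p => nat_of_bool ((val p.1).+1 == val p.2)].

(* sigma(Gamma): edge i -> j becomes sigma i -> sigma j *)
Definition relabel n (s : 'S_n) (g : mgraph n) : mgraph n :=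
  [ffun p => g ((s^-1)%g p.1, (s^-1)%g p.2)].

Definition monotone n (p : 'S_n) : bool :=
  [forall i : 'I_n,
     [forall (j : 'I_n | (val j < val i)%N), (val (p j) < val (p i))%N] ||
     [forall (j : 'I_n | (val j < val i)%N), (val (p i) < val (p j))%N]].

(* M_n^k : monotone permutations with pi(1) = k  (i.e. p(0) = k-1 here) *)
Definition Mnk n k : {set 'S_n} :=
  [set p : 'S_n | monotone p &
     [forall i : 'I_n, (val i == 0%N) ==> (val (p i) == k.-1)]].

Definition lemma_comb (F : fieldType) n k : fcomb F n :=
  (1, Lambda n) :: [seq ((-1) ^+ k, relabel p (Lambda n)) | p <- enum (Mnk n k)].

From mathcomp Require Import all_boot all_order all_algebra all_fingroup.
From mathcomp Require Import zify ring.
Set Implicit Arguments. Unset Strict Implicit. Unset Printing Implicit Defensive.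
Import GRing.Theory.

(* In the paper's numbering, cutting Lambda_n at k leaves a path 1 -> ... -> k,
   whose k - 1 edges point towards k, and a path k -> ... -> n.  By the oriented
   2-cycle relation, reversing an edge changes the sign, so Lambda_n is
   (-1)^(k-1) times the tree T formed by the two paths k -> k-1 -> ... -> 1 and
   k -> k+1 -> ... -> n.  The 3-cycle relation together with edge reversals turns
   a fork a -> b, a -> c into a -> b -> c plus a -> c -> b; by induction on the
   lengths of the two branches, T is the sum of the paths k -> w_1 -> ... over
   all shuffles w of (k-1, ..., 1) and (k+1, ..., n).  The words k w are exactly
   the one-line notations of the permutations in M_n^k, and pi(Lambda_n) is the
   path pi(1) -> ... -> pi(n). *)

Lemma pairwise_filterE (T : Type) (r : rel T) (a : pred T) s :
  pairwise r (filter a s) = pairwise (fun x y => a x ==> a y ==> r x y) s.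
Proof.
elim: s => //= x s IHs; case: (a x) => /=; rewrite ?pairwise_cons IHs ?all_filter //.
by rewrite all_predT.
Qed.

Section SeqFacts.

Variable T : eqType.
Implicit Types (r : rel T) (s t xs ys : seq T).

Lemma perm_cat_cons xs (y : T) ys : perm_eq (xs ++ y :: ys) (y :: xs ++ ys).
Proof. by rewrite -cat1s perm_catCA. Qed.

Lemma perm_pairwise_eq r s t :
  antisymmetric r -> pairwise r s -> perm_eq t s -> (t == s) = pairwise r t.
Proof.
move=> r_anti r_s ts; apply/eqP/idP => [-> //|r_t].
exact: (pairwise_eq r_anti r_t r_s ts).
Qed.

Lemma uniq_fork (r x y : T) xs ys : uniq (r :: (x :: xs) ++ y :: ys) ->
  [/\ r != x, r != y, x != y & uniq (x :: xs ++ y :: ys)].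
Proof.
move=> rxys_uniq.
have [r_xys xys_uniq] : r \notin x :: xs ++ y :: ys /\ uniq (x :: xs ++ y :: ys).
  exact/andP.
have x_ys : x \notin xs ++ y :: ys by case/andP: xys_uniq.
split=> //.
- by apply: contraNneq r_xys => ->; rewrite mem_head.
- by apply: contraNneq r_xys => ->; rewrite in_cons mem_cat mem_head !orbT.
- by apply: contraNneq x_ys => ->; rewrite mem_cat mem_head orbT.
Qed.

End SeqFacts.

Section Combinations.

Local Open Scope ring_scope.

Variables (F : fieldType) (n : nat).
Implicit Types (a : F) (x y z : fcomb F n) (g h : mgraph n).

Lemma coef_nil g : coef ([::] : fcomb F n) g = 0.
Proof. by rewrite /coef big_nil. Qed.

Lemma coef_cons a h x g : coef ((a, h) :: x) g = a * (h == g)%:R + coef x g.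
Proof. by rewrite /coef big_cons /=; case: eqP; rewrite ?mulr1 ?mulr0. Qed.

Lemma coef_cat x y g : coef (x ++ y) g = coef x g + coef y g.
Proof. by rewrite /coef big_cat. Qed.

Lemma coef_map (T : Type) a (f : T -> mgraph n) (s : seq T) g :
  coef [seq (a, f w) | w <- s] g = a * \sum_(w <- s) (f w == g)%:R.
Proof.
rewrite /coef big_map mulr_sumr; apply: eq_bigr => w _ /=.
by case: eqP; rewrite ?mulr1 ?mulr0.
Qed.

Definition scale_fcomb a x : fcomb F n := [seq (a * p.1, p.2) | p <- x].

Lemma coef_scale_fcomb a x g : coef (scale_fcomb a x) g = a * coef x g.
Proof.
rewrite /coef big_map mulr_sumr; apply: eq_bigr => p _ /=.
by case: eqP; rewrite ?mulr0.
Qed.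

Lemma equiv0_ext x y : coef x =1 coef y -> equiv0 x -> equiv0 y.
Proof. by move=> exy [l [lR xl]]; exists l; split=> // g; rewrite -exy. Qed.

Lemma equiv0_R_gen x : R_gen x -> equiv0 x.
Proof.
move=> Rx; exists [:: (1, x)]; split=> [p|g]; first by rewrite inE => /eqP ->.
by rewrite big_seq1 mul1r.
Qed.

Lemma equiv0_cat x y : equiv0 x -> equiv0 y -> equiv0 (x ++ y).
Proof.
move=> [lx [lxR xl]] [ly [lyR yl]]; exists (lx ++ ly); split=> [p|g].
  by rewrite mem_cat => /orP[/lxR|/lyR].
by rewrite coef_cat big_cat xl yl.
Qed.

Lemma equiv0_scale_fcomb a x : equiv0 x -> equiv0 (scale_fcomb a x).
Proof.
move=> [l [lR xl]]; exists [seq (a * p.1, p.2) | p <- l].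
split=> [p /mapP[q /lR Rq ->] //|g].
by rewrite coef_scale_fcomb xl big_map mulr_sumr; apply: eq_bigr => p _; rewrite mulrA.
Qed.

Definition lincomb (l : seq (F * fcomb F n)) : fcomb F n :=
  flatten [seq scale_fcomb p.1 p.2 | p <- l].

Lemma coef_lincomb l g : coef (lincomb l) g = \sum_(p <- l) p.1 * coef p.2 g.
Proof.
elim: l => [|p l IHl]; first by rewrite big_nil coef_nil.
by rewrite big_cons /= coef_cat coef_scale_fcomb IHl.
Qed.

Fixpoint all_equiv0 (l : seq (F * fcomb F n)) : Prop :=
  if l is p :: l' then equiv0 p.2 /\ all_equiv0 l' else True.

Lemma equiv0_lincomb l : all_equiv0 l -> equiv0 (lincomb l).
Proof.
elim: l => [_|p l IHl [p0 l0]].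
  by exists [::]; split=> // g; rewrite coef_nil big_nil.
exact: equiv0_cat (equiv0_scale_fcomb _ p0) (IHl l0).
Qed.

Lemma equiv0_of_lincomb l z : all_equiv0 l ->
  (forall g, coef z g = \sum_(p <- l) p.1 * coef p.2 g) -> equiv0 z.
Proof.
move=> l0 ez; apply: equiv0_ext (equiv0_lincomb l0) => g.
by rewrite coef_lincomb ez.
Qed.

End Combinations.

Definition flip {T : Type} (e : T * T) : T * T := (e.2, e.1).

Lemma flipK (T : Type) : cancel (@flip T) flip.
Proof. by case. Qed.

Section EdgeLists.

Variable n : nat.
Implicit Types (e : 'I_n * 'I_n) (es : seq ('I_n * 'I_n)).

Definition graph_of es : mgraph n := [ffun e => count_mem e es].

Definition loopfree es := all (fun e => e.1 != e.2) es.

Lemma perm_graph_of es es' : perm_eq es es' -> graph_of es = graph_of es'.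
Proof. by move/seq.permP=> ees; apply/ffunP => e; rewrite !ffunE ees. Qed.

Lemma del_edge_graph_of e es : del_edge (graph_of es) e = graph_of (rem e es).
Proof.
apply/ffunP => e'; rewrite !ffunE count_mem_rem eq_sym.
by case: eqP; rewrite ?subn1 ?subn0.
Qed.

Lemma graph_of_cat_cons es e es' : graph_of (es ++ e :: es') = graph_of (e :: es ++ es').
Proof. exact/perm_graph_of/perm_cat_cons. Qed.

Lemma graph_of_gt0 e es : e \in es -> (0 < graph_of es e)%N.
Proof. by rewrite ffunE -has_pred1 has_count. Qed.

Lemma loopless_graph_of es : loopfree es -> loopless (graph_of es).
Proof.
move=> es_lf; apply/forallP => i; rewrite ffunE; apply/eqP/count_memPn.
by apply/negP => /(allP es_lf); rewrite eqxx.
Qed.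

Lemma loopfree_cons (i j : 'I_n) es : i != j -> loopfree es -> loopfree ((i, j) :: es).
Proof. by move=> /= -> ->. Qed.

Lemma loopfree_cat es es' : loopfree es -> loopfree es' -> loopfree (es ++ es').
Proof. by rewrite /loopfree all_cat => -> ->. Qed.

Lemma loopfree_flip es : loopfree es -> loopfree (map flip es).
Proof. by rewrite /loopfree all_map; apply: sub_all => -[i j]; rewrite /= eq_sym. Qed.

End EdgeLists.

Ltac perm_edges :=
  apply: perm_graph_of; apply/seq.permP => ?; do ?rewrite /= count_cat; rewrite /=; ring.

Section CycleRelations.

Local Open Scope ring_scope.

Variables (F : fieldType) (n : nat).
Implicit Types (a b c : 'I_n) (C es : seq ('I_n * 'I_n)).

Definition cycle_edges (s : seq 'I_n) := [seq (x, next s x) | x <- s].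

Lemma R_gen_cycle_rel s C : uniq s -> (2 <= size s)%N ->
  loopfree (cycle_edges s ++ C) -> R_gen (cycle_rel F (graph_of (cycle_edges s ++ C)) s).
Proof.
move=> s_uniq s_ge2 lf; right; exists (graph_of (cycle_edges s ++ C)), s.
split=> //; first exact: loopless_graph_of.
by split=> //; apply/allP => x xs; rewrite graph_of_gt0 // mem_cat map_f.
Qed.

Lemma equiv0_reverse_edge a b C : a != b -> loopfree C ->
  equiv0 ([:: (1, graph_of ((a, b) :: C)); (1, graph_of ((b, a) :: C))] : fcomb F n).
Proof.
move=> ab C_lf; have ba : b != a by rewrite eq_sym.
have := @R_gen_cycle_rel [:: a; b] C.
rewrite /cycle_rel /cycle_edges /next /= eqxx (negbTE ba) eqxx /= inE ab ba C_lf.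
move=> /(_ isT isT isT) /equiv0_R_gen; apply: equiv0_ext => g.
rewrite !del_edge_graph_of /= !eqxx !xpair_eqE (negbTE ab) (negbTE ba) /=.
by rewrite !coef_cons coef_nil; ring.
Qed.

Lemma equiv0_triangle a b c C : a != b -> a != c -> b != c -> loopfree C ->
  equiv0 ([:: (1, graph_of ((b, c) :: (c, a) :: C));
              (1, graph_of ((a, b) :: (c, a) :: C));
              (1, graph_of ((a, b) :: (b, c) :: C))] : fcomb F n).
Proof.
move=> ab ac bc C_lf.
have [ba ca cb] : [/\ b != a, c != a & c != b] by rewrite !(eq_sym _ a) (eq_sym c).
have := @R_gen_cycle_rel [:: a; b; c] C.
rewrite /cycle_rel /cycle_edges /next /= !eqxx (negbTE ba) (negbTE ca) (negbTE cb) /=.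
rewrite !inE negb_or ab ac bc ca C_lf => /(_ isT isT isT) /equiv0_R_gen.
apply: equiv0_ext => g; rewrite !del_edge_graph_of /= !eqxx !xpair_eqE.
rewrite (negbTE ab) (negbTE ba) (negbTE bc) (negbTE ac) (negbTE ca) /=.
by rewrite !coef_cons coef_nil; ring.
Qed.

Lemma equiv0_fork a b c C : a != b -> a != c -> b != c -> loopfree C ->
  equiv0 ([:: (1, graph_of ((a, b) :: (a, c) :: C));
              (-1, graph_of ((a, b) :: (b, c) :: C));
              (-1, graph_of ((a, c) :: (c, b) :: C))] : fcomb F n).
Proof.
move=> ab ac bc C_lf; have ca : c != a by rewrite eq_sym.
have T := equiv0_triangle ab ac bc C_lf.
have R1 := equiv0_reverse_edge ca (loopfree_cons ab C_lf).
have R2 := equiv0_reverse_edge ca (loopfree_cons bc C_lf).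
have R3 := equiv0_reverse_edge bc (loopfree_cons ac C_lf).
apply: (equiv0_of_lincomb (l := [:: (1, _); (-1, _); (1, _); (-1, _)])
                         (conj R1 (conj T (conj R2 (conj R3 I))))) => g.
rewrite !big_cons big_nil /= !coef_cons !coef_nil.
have swap e1 e2 es : graph_of (e1 :: e2 :: es) = graph_of (e2 :: e1 :: es) by perm_edges.
rewrite (swap (c, a) (a, b)) (swap (a, c) (a, b)) (swap (c, a) (b, c)) (swap (a, c) (b, c)).
rewrite (swap (c, b) (a, c)); ring.
Qed.

Lemma equiv0_reverse_edges es C : loopfree es -> loopfree C ->
  equiv0 ([:: (1, graph_of (es ++ C));
              (- (-1) ^+ size es, graph_of (map flip es ++ C))] : fcomb F n).
Proof.
elim: es C => [|[a b] es IHes] C /= => [_ _|/andP[ab es_lf] C_lf].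
  apply: (equiv0_of_lincomb (l := [::])) => // g.
  by rewrite big_nil !coef_cons coef_nil; ring.
have R := equiv0_reverse_edge ab (loopfree_cat es_lf C_lf).
have ba : b != a by rewrite eq_sym.
have IH := IHes ((b, a) :: C) es_lf (loopfree_cons ba C_lf).
apply: (equiv0_of_lincomb (l := [:: (1, _); (-1, _)]) (conj R (conj IH I))) => g.
by rewrite !big_cons big_nil /= !coef_cons !coef_nil !graph_of_cat_cons exprS; ring.
Qed.

End CycleRelations.

(* The inner fixpoint makes the recursion on both lists structural. *)
Fixpoint shuffle (T : Type) (xs ys : seq T) {struct xs} : seq (seq T) :=
  match xs with
  | [::] => [:: ys]
  | x :: xs' =>
    let fix shuffle_xs ys :=
      if ys is y :: ys' then map (cons x) (shuffle xs' ys) ++ map (cons y) (shuffle_xs ys')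
      else [:: xs] in
    shuffle_xs ys
  end.

Arguments shuffle : simpl never.

Section ShuffleEquations.

Variable T : Type.
Implicit Types (x y : T) (xs ys : seq T).

Lemma shuffle0s ys : shuffle [::] ys = [:: ys]. Proof. by []. Qed.

Lemma shuffles0 xs : shuffle xs [::] = [:: xs]. Proof. by case: xs. Qed.

Lemma shuffle_cons x y xs ys : shuffle (x :: xs) (y :: ys) =
  map (cons x) (shuffle xs (y :: ys)) ++ map (cons y) (shuffle (x :: xs) ys).
Proof. by []. Qed.

End ShuffleEquations.

Section Shuffle.

Variable T : eqType.
Implicit Types (x y z : T) (xs ys w : seq T).

Lemma mem_shuffle_consl x xs ys w :
  w \in shuffle xs ys -> x :: w \in shuffle (x :: xs) ys.
Proof.
case: ys => [|y ys]; first by rewrite !shuffles0 !inE => /eqP ->.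
by rewrite shuffle_cons mem_cat => /(map_f (cons x)) ->.
Qed.

Lemma mem_shuffle_consr y xs ys w :
  w \in shuffle xs ys -> y :: w \in shuffle xs (y :: ys).
Proof.
case: xs => [|x xs]; first by rewrite !shuffle0s !inE => /eqP ->.
by rewrite shuffle_cons mem_cat => /(map_f (cons y)) ->; rewrite orbT.
Qed.

Lemma perm_shuffle xs ys w : w \in shuffle xs ys -> perm_eq w (xs ++ ys).
Proof.
elim: xs ys w => [|x xs IHx] ys w; first by rewrite shuffle0s inE => /eqP ->.
elim: ys w => [|y ys IHy] w; first by rewrite shuffles0 inE cats0 => /eqP ->.
rewrite shuffle_cons mem_cat => /orP[] /mapP[w' w'_shuf ->].
  by rewrite /= perm_cons IHx.
have := IHy _ w'_shuf; rewrite -(perm_cons y) => /permPl ->.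
by rewrite perm_sym perm_cat_cons.
Qed.

Lemma filter_mem_cons_notin x xs w :
  x \notin w -> [seq z <- w | z \in x :: xs] = [seq z <- w | z \in xs].
Proof.
move=> xw; apply: eq_in_filter => z zw; rewrite inE.
by case: eqP => // zx; rewrite -zx zw in xw.
Qed.

Lemma filter_shuffle xs ys w : uniq (xs ++ ys) -> w \in shuffle xs ys ->
  [seq z <- w | z \in xs] = xs /\ [seq z <- w | z \in ys] = ys.
Proof.
elim: xs ys w => [|x xs IHx] ys w.
  rewrite shuffle0s inE => _ /eqP ->.
  by rewrite filter_pred0 (all_filterP (allss _)).
elim: ys w => [|y ys IHy] w xys_uniq.
  rewrite shuffles0 inE => /eqP ->.
  by rewrite filter_pred0 (all_filterP (allss _)).
rewrite shuffle_cons mem_cat => /orP[] /mapP[w' w'_shuf ->] /=.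
- move: xys_uniq => /= /andP[x_xys xys_uniq].
  have [fx fy] := IHx _ _ xys_uniq w'_shuf.
  have x_w' : x \notin w' by rewrite (perm_mem (perm_shuffle w'_shuf)).
  rewrite mem_head filter_mem_cons_notin // fx fy.
  by move: x_xys; rewrite mem_cat negb_or => /andP[_ /negbTE ->].
- move: xys_uniq; rewrite (perm_uniq (perm_cat_cons _ _ _)) => /andP[y_xys xys_uniq].
  have [fx fy] := IHy _ xys_uniq w'_shuf.
  have y_w' : y \notin w' by rewrite (perm_mem (perm_shuffle w'_shuf)).
  rewrite mem_head (filter_mem_cons_notin ys y_w') fy.
  by move: y_xys; rewrite mem_cat negb_or => /andP[/negbTE -> _].
Qed.

Lemma shuffle_of_filter xs ys w : uniq (xs ++ ys) -> perm_eq w (xs ++ ys) ->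
  [seq z <- w | z \in xs] = xs -> [seq z <- w | z \in ys] = ys -> w \in shuffle xs ys.
Proof.
elim: w xs ys => [|z w IHw] xs ys xys_uniq.
  by move=> _ <- <-; rewrite shuffle0s inE.
have /and3P[_ /hasPn xs_ys _] : [&& uniq xs, ~~ has (mem xs) ys & uniq ys].
  by rewrite -cat_uniq.
move=> zw_perm; have /andP[z_w _] : uniq (z :: w) by rewrite (perm_uniq zw_perm).
have := perm_mem zw_perm z; rewrite mem_head mem_cat => /esym/orP[] z_xys.
- have z_ys : z \notin ys by exact: contraL (xs_ys z) z_xys.
  rewrite /= z_xys (negbTE z_ys) {xs_ys}.
  case: xs z_xys xys_uniq zw_perm => // x xs _ xys_uniq zw_perm [zx fx] fy; subst x.
  rewrite /= perm_cons in zw_perm; apply: mem_shuffle_consl.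
  apply: IHw => //; first by case/andP: xys_uniq.
  by rewrite -(filter_mem_cons_notin _ z_w).
- have z_xs : z \notin xs by exact: xs_ys.
  rewrite /= z_xys (negbTE z_xs) {xs_ys}.
  case: ys z_xys xys_uniq zw_perm => // y ys _ xys_uniq zw_perm fx [zy fy]; subst y.
  rewrite (perm_uniq (perm_cat_cons _ _ _)) in xys_uniq.
  rewrite (permPr (perm_cat_cons _ _ _)) perm_cons in zw_perm.
  apply: mem_shuffle_consr.
  apply: IHw => //; first by case/andP: xys_uniq.
  by rewrite -(filter_mem_cons_notin _ z_w).
Qed.

Lemma uniq_shuffle xs ys : uniq (xs ++ ys) -> uniq (shuffle xs ys).
Proof.
elim: xs ys => [|x xs IHx] ys; first by rewrite shuffle0s.
elim: ys => [|y ys IHy] xys_uniq; first by rewrite shuffles0.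
have xy : x != y.
  by apply: contraTneq xys_uniq => ->; rewrite /= mem_cat mem_head orbT.
rewrite shuffle_cons cat_uniq !map_inj_uniq; try by move=> ? ? [].
apply/and3P; split.
- by apply: IHx; case/andP: xys_uniq.
- apply/hasPn => _ /mapP[w _ ->]; apply/mapP => -[w' _ [exy _]].
  by rewrite exy eqxx in xy.
- by apply: IHy; move: xys_uniq; rewrite (perm_uniq (perm_cat_cons _ _ _)) => /andP[].
Qed.

Lemma mem_shuffle xs ys w : uniq (xs ++ ys) -> (w \in shuffle xs ys) =
  [&& perm_eq w (xs ++ ys), [seq z <- w | z \in xs] == xs & [seq z <- w | z \in ys] == ys].
Proof.
move=> xys_uniq; apply/idP/and3P => [w_shuf | [w_perm /eqP fx /eqP fy]].
  by have [-> ->] := filter_shuffle xys_uniq w_shuf; rewrite perm_shuffle.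
exact: shuffle_of_filter.
Qed.

End Shuffle.

Definition path_edges {T : Type} (s : seq T) : seq (T * T) :=
  if s is x :: s' then pairmap pair x s' else [::].

Lemma loopfree_path_edges n (s : seq 'I_n) : uniq s -> loopfree (path_edges s).
Proof.
case: s => //= x s; elim: s x => //= y s IHs x /andP[x_ys ys_uniq].
rewrite IHs // andbT; apply: contraNneq x_ys => ->; exact: mem_head.
Qed.

Definition edge_map {T U : Type} (f : T -> U) (e : T * T) : U * U := (f e.1, f e.2).

Section PathEdges.

Variable T : Type.
Implicit Types (x : T) (s t : seq T).

Lemma path_edges_cat_cons s x t :
  path_edges (s ++ x :: t) = path_edges (rcons s x) ++ path_edges (x :: t).
Proof. by case: s => // y s; rewrite /= -cats1 !pairmap_cat -catA. Qed.

Lemma path_edges_rev s : path_edges (rev s) = rev (map flip (path_edges s)).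
Proof.
elim: s => // x [|y s] // IHs.
rewrite rev_cons -cats1 rev_cons -cats1 -catA path_edges_cat_cons.
by rewrite cats1 -rev_cons IHs /= rev_cons -cats1.
Qed.

Lemma path_edges_map (U : Type) (f : T -> U) s :
  path_edges (map f s) = map (edge_map f) (path_edges s).
Proof. by case: s => // x s /=; elim: s x => //= y s IHs x; rewrite IHs. Qed.

End PathEdges.

Section MergePaths.

Local Open Scope ring_scope.

Variables (F : fieldType) (n : nat).
Implicit Types (r x y : 'I_n) (xs ys w : seq 'I_n) (C : seq ('I_n * 'I_n)).

Definition two_paths r xs ys C :=
  graph_of (path_edges (r :: xs) ++ path_edges (r :: ys) ++ C).

Lemma equiv0_fork_paths r x y xs ys C : loopfree C -> uniq (r :: (x :: xs) ++ y :: ys) ->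
  equiv0 ([:: (1, two_paths r (x :: xs) (y :: ys) C);
              (-1, two_paths x xs (y :: ys) ((r, x) :: C));
              (-1, two_paths y (x :: xs) ys ((r, y) :: C))] : fcomb F n).
Proof.
move=> C_lf /uniq_fork[rx ry xy xys_uniq].
have C'_lf : loopfree (path_edges (x :: xs) ++ path_edges (y :: ys) ++ C).
  move: xys_uniq; rewrite -cat_cons cat_uniq => /and3P[xs_uniq _ ys_uniq].
  by rewrite !loopfree_cat ?loopfree_path_edges.
apply: equiv0_ext (equiv0_fork F rx ry xy C'_lf) => g.
by congr (coef [:: (_, _); (_, _); (_, _)] g); rewrite /two_paths; perm_edges.
Qed.

Lemma equiv0_merge_paths r xs ys C : loopfree C -> uniq (r :: xs ++ ys) ->
  equiv0 ((1, two_paths r xs ys C) ::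
          [seq (-1, graph_of (path_edges (r :: w) ++ C)) | w <- shuffle xs ys] : fcomb F n).
Proof.
elim: xs r ys C => [|x xs IHx] r ys C C_lf.
  move=> _; apply: (equiv0_of_lincomb (l := [::])) => // g.
  by rewrite shuffle0s big_nil /= !coef_cons coef_nil; ring.
elim: ys r C C_lf => [|y ys IHy] r C C_lf.
  move=> _; apply: (equiv0_of_lincomb (l := [::])) => // g.
  by rewrite shuffles0 big_nil /= !coef_cons coef_nil; ring.
move=> rxys_uniq; have Fk := equiv0_fork_paths C_lf rxys_uniq.
have [rx ry _ xys_uniq] := uniq_fork rxys_uniq.
have yxs_uniq : uniq (y :: (x :: xs) ++ ys) by rewrite -(perm_uniq (perm_cat_cons _ _ _)).
have IHx' := IHx x (y :: ys) _ (loopfree_cons rx C_lf) xys_uniq.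
have IHy' := IHy y _ (loopfree_cons ry C_lf) yxs_uniq.
apply: (equiv0_of_lincomb (l := [:: (1, _); (1, _); (1, _)])
                         (conj Fk (conj IHx' (conj IHy' I)))) => g.
have sum_path_cons a S :
    \sum_(w <- S) (graph_of (path_edges [:: r, a & w] ++ C) == g)%:R =
    \sum_(w <- S) (graph_of (path_edges (a :: w) ++ (r, a) :: C) == g)%:R :> F.
  by apply: eq_bigr => w _; rewrite graph_of_cat_cons.
rewrite shuffle_cons map_cat !big_cons big_nil !coef_cons coef_cat !coef_map !big_map.
by rewrite !sum_path_cons coef_nil /=; ring.
Qed.

End MergePaths.

Lemma count_path_edges_iota m l a b :
  count_mem (a, b) (path_edges (iota m l)) = [&& m <= a, a.+1 < m + l & b == a.+1].
Proof.
elim: l m => [|[|l] IHl] m; try by rewrite /=; lia.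
by move: (IHl m.+1); rewrite /= xpair_eqE => ->; lia.
Qed.

Section Ordinals.

Variable n : nat.
Implicit Types (c i j : 'I_n).

Lemma count_mem_edge_val e (es : seq ('I_n * 'I_n)) :
  count_mem e es = count_mem (edge_map val e) (map (edge_map val) es).
Proof.
rewrite count_map; apply: eq_count => e' /=; apply/eqP/eqP => [->//|].
by case: e e' => [i j] [i' j'] [/val_inj -> /val_inj ->].
Qed.

Lemma Lambda_path : Lambda n = graph_of (path_edges (enum 'I_n)).
Proof.
apply/ffunP => -[i j]; rewrite !ffunE count_mem_edge_val -path_edges_map val_enum_ord.
by rewrite count_path_edges_iota /edge_map /=; have := ltn_ord i; have := ltn_ord j; lia.
Qed.

Lemma relabel_graph_of (p : 'S_n) es :
  relabel p (graph_of es) = graph_of (map (edge_map p) es).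
Proof.
apply/ffunP => -[i j]; rewrite !ffunE count_map; apply: eq_count => -[i' j'] /=.
by rewrite /edge_map !xpair_eqE /= !(canF_eq (permK p)).
Qed.

Definition oneline (p : 'S_n) := [seq p i | i <- enum 'I_n].

Lemma relabel_Lambda (p : 'S_n) : relabel p (Lambda n) = graph_of (path_edges (oneline p)).
Proof. by rewrite Lambda_path relabel_graph_of /oneline path_edges_map. Qed.

Definition below c := [seq i <- rev (enum 'I_n) | nat_of_ord i < c].
Definition above c := [seq i <- enum 'I_n | c < nat_of_ord i].

Lemma mem_below c i : (i \in below c) = (i < c).
Proof. by rewrite mem_filter mem_rev mem_enum andbT. Qed.

Lemma mem_above c i : (i \in above c) = (c < i).
Proof. by rewrite mem_filter mem_enum andbT. Qed.

Lemma map_val_below c : map val (below c) = rev (iota 0 c).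
Proof.
rewrite /below -(filter_map val (fun m => m < c)) map_rev val_enum_ord filter_rev.
by rewrite (filter_iota_ltn 0 (ltnW (ltn_ord c))).
Qed.

Lemma map_val_above c : map val (above c) = iota c.+1 (n - c.+1).
Proof.
rewrite /above -(filter_map val (fun m => c < m)) val_enum_ord.
have -> : iota 0 n = iota 0 c.+1 ++ iota c.+1 (n - c.+1).
  by rewrite -iotaD; congr iota; have := ltn_ord c; lia.
rewrite filter_cat (eq_in_filter (a2 := pred0)) ?filter_pred0; last first.
  by move=> i; rewrite mem_iota /=; lia.
by apply/all_filterP/allP => i; rewrite mem_iota; lia.
Qed.

Lemma size_below c : size (below c) = c.
Proof. by rewrite -(size_map val) map_val_below size_rev size_iota. Qed.

Lemma enum_ord_below_above c : enum 'I_n = rev (below c) ++ c :: above c.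
Proof.
apply: (inj_map val_inj); rewrite map_cat /= map_rev map_val_below map_val_above revK.
rewrite val_enum_ord -[_ :: _]/(iota c (n - c.+1).+1) -iotaD.
by congr iota; have := ltn_ord c; lia.
Qed.

Lemma perm_below_above c : perm_eq (c :: below c ++ above c) (enum 'I_n).
Proof.
rewrite (enum_ord_below_above c) (permPr (perm_cat_cons _ _ _)) perm_cons perm_cat2r.
by rewrite perm_sym perm_rev.
Qed.

Lemma uniq_below_above c : uniq (c :: below c ++ above c).
Proof. by rewrite (perm_uniq (perm_below_above c)) enum_uniq. Qed.

Lemma Lambda_below_above c :
  Lambda n = graph_of (map flip (path_edges (c :: below c)) ++ path_edges (c :: above c)).
Proof.
rewrite Lambda_path (enum_ord_below_above c) path_edges_cat_cons -rev_cons path_edges_rev.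
by apply: perm_graph_of; rewrite perm_cat2r perm_rev.
Qed.

Lemma pairwise_below c : pairwise (fun i j => j < i) (below c).
Proof.
rewrite -(pairwise_map val (fun m k => k < m)) map_val_below -sorted_pairwise.
  by rewrite rev_sorted iota_ltn_sorted.
by move=> y x z yx zy; apply: ltn_trans zy yx.
Qed.

Lemma pairwise_above c : pairwise (fun i j => i < j) (above c).
Proof.
rewrite -(pairwise_map val ltn) map_val_above -sorted_pairwise ?iota_ltn_sorted //.
exact: ltn_trans.
Qed.

Lemma filter_lt_below_above c : [seq i : 'I_n <- below c ++ above c | i < c] = below c.
Proof.
rewrite filter_cat (all_filterP _); last by apply/allP => i; rewrite mem_below.
rewrite (eq_in_filter (a2 := pred0)) ?filter_pred0 ?cats0 // => i.
by rewrite mem_above => ci; apply/negbTE; rewrite -leqNgt ltnW.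
Qed.

Lemma filter_gt_below_above c : [seq i : 'I_n <- below c ++ above c | c < i] = above c.
Proof.
rewrite filter_cat [X in _ ++ X](all_filterP _); last by apply/allP => i; rewrite mem_above.
rewrite (eq_in_filter (a2 := pred0)) ?filter_pred0 // => i.
by rewrite mem_below => ic; apply/negbTE; rewrite -leqNgt ltnW.
Qed.

End Ordinals.

Section LambdaShuffle.

Local Open Scope ring_scope.

Lemma equiv0_Lambda_shuffle (F : fieldType) n (c : 'I_n) :
  equiv0 ((1, Lambda n) :: [seq (- (-1) ^+ c, graph_of (path_edges (c :: w)))
                           | w <- shuffle (below c) (above c)] : fcomb F n).
Proof.
have cba_uniq := uniq_below_above c.
have cb_uniq : uniq (c :: below c).
  by apply: subseq_uniq cba_uniq; rewrite -cat_cons prefix_subseq.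
have ca_uniq : uniq (c :: above c).
  by apply: subseq_uniq cba_uniq; rewrite /= eqxx suffix_subseq.
have Rev := equiv0_reverse_edges F (loopfree_flip (loopfree_path_edges cb_uniq))
                                   (loopfree_path_edges ca_uniq).
have Mrg := equiv0_merge_paths F (C := [::]) isT cba_uniq.
apply: (equiv0_of_lincomb (l := [:: (1, _); ((-1) ^+ c, _)]) (conj Rev (conj Mrg I))) => g.
rewrite (Lambda_below_above c) !big_cons big_nil /= !coef_cons !coef_map coef_nil /two_paths.
rewrite size_map size_pairmap size_below (mapK (@flipK _)) !cats0.
by under [in RHS]eq_bigr do rewrite cats0; ring.
Qed.

End LambdaShuffle.

Lemma pairwise_enum_ord n (r : rel 'I_n) :
  pairwise r (enum 'I_n) <-> (forall i j : 'I_n, i < j -> r i j).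
Proof.
case: n r => [|n] r; first by rewrite enum_ord0; split=> // _ [].
split=> [/(pairwiseP ord0) r_enum i j ij | r_lt].
  have := r_enum i j; rewrite !inE size_enum_ord !ltn_ord !nth_ord_enum; exact.
apply/(pairwiseP ord0) => i j; rewrite !inE size_enum_ord => i_lt j_lt.
by rewrite -[i]/(val (Ordinal i_lt)) -[j]/(val (Ordinal j_lt)) !nth_ord_enum; apply: r_lt.
Qed.

Section Monotone.

Variable n : nat.
Implicit Types (a b c i j : 'I_n.+1) (w : seq 'I_n.+1) (p : 'S_n.+1).

Definition away_from c : rel 'I_n.+1 := fun a b =>
  ((a < c) ==> (b < c) ==> (b < a)) && ((c < a) ==> (c < b) ==> (a < b)).

Lemma away_from_below c a b : b < c -> away_from c a b = (b < a).
Proof. by rewrite /away_from; case: ltngtP; case: ltngtP; case: ltngtP => //=; lia. Qed.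

Lemma away_from_above c a b : c < b -> away_from c a b = (a < b).
Proof. by rewrite /away_from; case: ltngtP; case: ltngtP; case: ltngtP => //=; lia. Qed.

Lemma monotone_at p i :
  [forall (j : 'I_n.+1 | val j < val i), val (p j) < val (p i)] ||
  [forall (j : 'I_n.+1 | val j < val i), val (p i) < val (p j)] =
  [forall (j : 'I_n.+1 | val j < val i), away_from (p ord0) (p j) (p i)].
Proof.
have i_gt0 : val (p i) != val (p ord0) -> 0 < val i.
  by apply: contraNT; rewrite -eqn0Ngt => /eqP i0; rewrite (_ : i = ord0) //; apply: val_inj.
case: (ltngtP (p i) (p ord0)) => [lt_c | gt_c | eq_c].
- under [in RHS]eq_forallb => j do rewrite away_from_below //.
  have /negbTE -> // : ~~ [forall (j : 'I_n.+1 | val j < val i), val (p j) < val (p i)].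
  apply/negP => /forallP/(_ ord0)/implyP/(_ (i_gt0 (negbT (ltn_eqF lt_c)))).
  by move=> /(ltn_trans lt_c); rewrite ltnn.
- under [in RHS]eq_forallb => j do rewrite away_from_above //.
  rewrite orbC.
  have /negbTE -> // : ~~ [forall (j : 'I_n.+1 | val j < val i), val (p i) < val (p j)].
  apply/negP => /forallP/(_ ord0)/implyP/(_ (i_gt0 (negbT (gtn_eqF gt_c)))).
  by move=> /(ltn_trans gt_c); rewrite ltnn.
- have -> : i = ord0 by rewrite -(permK p i) (val_inj eq_c) permK.
  have vacuous (P : pred 'I_n.+1) : [forall (j : 'I_n.+1 | val j < val (@ord0 n)), P j].
    by apply/forallP => j; rewrite ltn0.
  by rewrite !vacuous.
Qed.

Lemma monotone_pairwise p : monotone p = pairwise (away_from (p ord0)) (oneline p).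
Proof.
rewrite /monotone /oneline pairwise_map (eq_forallb (monotone_at p)).
apply/forallP/idP => [mono | /pairwise_enum_ord away i].
  by apply/pairwise_enum_ord => j i ji; have /forallP/(_ j) := mono i; rewrite ji.
by apply/forallP => j; apply/implyP; apply: away.
Qed.

Lemma pairwise_away_from c w : pairwise (away_from c) w =
  pairwise (fun i j => j < i) [seq i : 'I_n.+1 <- w | i < c] &&
  pairwise (fun i j => i < j) [seq i : 'I_n.+1 <- w | c < i].
Proof. by rewrite !pairwise_filterE -pairwise_relI; apply: eq_pairwise. Qed.

Lemma pairwise_away_shuffle c w : perm_eq (c :: w) (enum 'I_n.+1) ->
  pairwise (away_from c) (c :: w) = (w \in shuffle (below c) (above c)).
Proof.
rewrite -(permPr (perm_below_above c)) perm_cons => w_perm.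
rewrite mem_shuffle ?w_perm; last by case/andP: (uniq_below_above c).
rewrite pairwise_cons (@eq_all _ _ predT) ?all_predT; last first.
  by move=> i; rewrite /away_from ltnn.
rewrite pairwise_away_from (eq_filter (mem_below c)) (eq_filter (mem_above c)).
have perm_below : perm_eq [seq i : 'I_n.+1 <- w | i < c] (below c).
  rewrite -[X in perm_eq _ X](filter_lt_below_above c); exact: perm_filter.
have perm_above : perm_eq [seq i : 'I_n.+1 <- w | c < i] (above c).
  rewrite -[X in perm_eq _ X](filter_gt_below_above c); exact: perm_filter.
have gt_anti : antisymmetric (fun i j : 'I_n.+1 => j < i).
  by move=> i j /andP[ij ji]; apply: val_inj; lia.
have lt_anti : antisymmetric (fun i j : 'I_n.+1 => i < j).
  by move=> i j /andP[ij ji]; apply: val_inj; lia.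
by rewrite (perm_pairwise_eq gt_anti (pairwise_below c) perm_below)
           (perm_pairwise_eq lt_anti (pairwise_above c) perm_above).
Qed.

Lemma Mnk_head k c p : val c = k.-1 -> (p \in Mnk n.+1 k) = (p ord0 == c) && monotone p.
Proof.
move=> ck; rewrite inE andbC; congr (_ && _); apply/forallP/eqP => [p0 | p0 i].
  by apply: val_inj; rewrite ck; apply/eqP/(implyP (p0 ord0)).
by apply/implyP => /eqP i0; rewrite (_ : i = ord0) ?p0 ?ck //; apply: val_inj.
Qed.

Lemma perm_oneline p : perm_eq (oneline p) (enum 'I_n.+1).
Proof.
apply: uniq_perm; first by rewrite map_inj_uniq ?enum_uniq //; apply: perm_inj.
  exact: enum_uniq.
by move=> i; rewrite mem_enum; apply/mapP; exists ((p^-1)%g i); rewrite ?mem_enum ?permKV.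
Qed.

Lemma oneline_inj : injective (@oneline n.+1).
Proof. by move=> p q /eq_in_map epq; apply/permP => i; rewrite epq ?mem_enum. Qed.

Lemma oneline_surj w : perm_eq w (enum 'I_n.+1) -> exists p, oneline p = w.
Proof.
move=> w_perm; have w_uniq : uniq w by rewrite (perm_uniq w_perm) enum_uniq.
have w_size : size w = n.+1 by rewrite (perm_size w_perm) size_enum_ord.
have nth_inj : injective (fun i : 'I_n.+1 => nth ord0 w i).
  by move=> i j /eqP; rewrite nth_uniq ?w_size // => /eqP/val_inj.
exists (perm nth_inj); apply: (@eq_from_nth _ ord0); first by rewrite size_map size_enum_ord.
move=> i; rewrite size_map size_enum_ord => i_lt.
by rewrite (nth_map ord0) ?size_enum_ord // permE nth_enum_ord.
Qed.

Lemma oneline_head p : oneline p = p ord0 :: behead (oneline p).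
Proof. by rewrite /oneline enum_ordSl. Qed.

Lemma perm_oneline_Mnk k c : val c = k.-1 ->
  perm_eq [seq oneline p | p <- enum (Mnk n.+1 k)]
          [seq c :: w | w <- shuffle (below c) (above c)].
Proof.
move=> ck; apply: uniq_perm.
- by rewrite map_inj_uniq ?enum_uniq //; apply: oneline_inj.
- have /andP[_ /uniq_shuffle shuffle_uniq] := uniq_below_above c.
  by rewrite map_inj_uniq // => ? ? [].
move=> s; apply/mapP/mapP => [[p] | [w w_shuf ->]].
  rewrite mem_enum (Mnk_head _ ck) monotone_pairwise => /andP[/eqP p0 p_away] ->.
  exists (behead (oneline p)); last by rewrite oneline_head p0.
  by rewrite -pairwise_away_shuffle -p0 -oneline_head ?perm_oneline.
have cw_perm : perm_eq (c :: w) (enum 'I_n.+1).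
  by rewrite -(permPr (perm_below_above c)) perm_cons perm_shuffle.
have [p pw] := oneline_surj cw_perm.
have p0 : p ord0 = c by move: pw; rewrite oneline_head => -[].
exists p => //.
by rewrite mem_enum (Mnk_head _ ck) p0 eqxx monotone_pairwise p0 pw pairwise_away_shuffle.
Qed.

End Monotone.

Local Open Scope ring_scope.

Lemma sum_relabel_Mnk (F : fieldType) n k (c : 'I_n.+1) g : val c = k.-1 ->
  \sum_(p <- enum (Mnk n.+1 k)) (relabel p (Lambda n.+1) == g)%:R =
  \sum_(w <- shuffle (below c) (above c)) (graph_of (path_edges (c :: w)) == g)%:R :> F.
Proof.
move=> ck; under eq_bigr do rewrite relabel_Lambda.
rewrite -(big_map (@oneline n.+1) xpredT (fun s => (graph_of (path_edges s) == g)%:R)).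
by rewrite (perm_big _ (perm_oneline_Mnk ck)) big_map.
Qed.

Theorem lemma4p8 (F : fieldType) (n k : nat) :
  [pchar F]%R =i pred0 -> (2 <= n)%N -> (2 <= k <= n)%N ->
  equiv0 (lemma_comb F n k).
Proof.
move=> _ n_ge2 /andP[k_ge2 k_le_n].
case: n n_ge2 k_le_n => // n _ k_le_n.
have k_lt : (k.-1 < n.+1)%N by lia.
pose c := Ordinal k_lt; have ck : val c = k.-1 by [].
apply: equiv0_ext (equiv0_Lambda_shuffle F c) => g.
rewrite /lemma_comb !coef_cons !coef_map (sum_relabel_Mnk _ _ ck).
have sign : (-1) ^+ k = - (-1) ^+ k.-1 :> F.
  by case: k k_ge2 {k_le_n k_lt c ck} => // k _; rewrite exprS mulN1r.
by rewrite sign.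
Qed.
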